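(* Let $G$ and $H$ be finite AC-groups with $|G|=|H|$. Then $A_G(t)=A_H(t)$ if and only if $B_G(t)=B_H(t)$.
   Context: A finite group $G$ is an AC-group if the centralizer of every non-central element is abelian. For a finite group $G$ and $n\ge 0$, $G$ acts on $G^n$ by simultaneous conjugation. Let $G^{(n)}\subseteq G^n$ be the set of $n$-tuples of pairwise commuting elements. Let $\alpha_{G,n}$ (resp. $\beta_{G,n}$) be the number of $G$-orbits on $G^n$ (resp. on $G^{(n)}$), and set $A_G(t)=\sum_{n\ge0}\alpha_{G,n}t^n$, $B_G(t)=\sum_{n\ge0}\beta_{G,n}t^n$. *)

From mathcomp Require Import all_boot all_fingroup all_solvable.
Set Implicit Arguments. Unset Strict Implicit. Unset Printing Implicit Defensive.
Local Open Scope group_scope.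

(* A finite group is modelled as a finGroupType gT (the group is [set: gT]). *)

Definition AC_group (gT : finGroupType) : Prop :=
  forall x : gT, x \notin 'Z([set: gT]) -> abelian 'C[x].

Definition tconj (gT : finGroupType) (n : nat)
    (t : {ffun 'I_n -> gT}) (g : gT) : {ffun 'I_n -> gT} :=
  [ffun i => t i ^ g].

Definition torbit (gT : finGroupType) (n : nat) (t : {ffun 'I_n -> gT})
  : {set {ffun 'I_n -> gT}} := [set tconj t g | g : gT].

Definition pcomm (gT : finGroupType) (n : nat) (t : {ffun 'I_n -> gT}) : bool :=
  [forall i, forall j, t i * t j == t j * t i].

Definition alpha (gT : finGroupType) (n : nat) : nat :=
  #|[set torbit t | t : {ffun 'I_n -> gT}]|.

Definition beta (gT : finGroupType) (n : nat) : nat :=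
  #|[set torbit t | t in [pred t : {ffun 'I_n -> gT} | pcomm t]]|.

From mathcomp Require Import all_boot all_order all_fingroup all_solvable all_algebra.
From mathcomp Require Import ring.

(* Write N = |G|, z = |Z(G)|, c_x = |C_G(x)| and P_n for the number of
   commuting n-tuples.  By the Frobenius-Cauchy (Burnside) lemma,
   alpha_n N = z N^n + S_n with S_n = sum_{x not in Z(G)} c_x^n, and
   beta_n N = P_(n+1).  In an AC-group every tuple inside a non-central
   centralizer commutes, whence beta_n N = z P_n + S_n.  So alpha and beta are
   both determined by z and the power sums S_n, and conversely they determine
   them.  For alpha this is uniqueness of exponential sums, as c_x < N.  For
   beta, the recursion P_(n+1) = z P_n + S_n solves to
     P_n = (1 - W) z^n + sum_{x not in Z(G)} c_x^n / (c_x - z),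
   where W = sum_{x not in Z(G)} 1 / (c_x - z) counts the distinct
   centralizers of non-central elements, so W <> 1 and z is the least base
   occurring in P_n. *)

Set Implicit Arguments. Unset Strict Implicit. Unset Printing Implicit Defensive.

Import Order.TTheory GRing.Theory Num.Theory.
Local Open Scope group_scope.

Section ExponentialSums.

Local Open Scope ring_scope.

Variable R : idomainType.
Implicit Types (s : seq (R * R)) (q : {poly R}).

Definition expsum s (n : nat) : R := \sum_(p <- s) p.1 * p.2 ^+ n.

Lemma expsum_horner s q :
  \sum_(p <- s) p.1 * q.[p.2] = \sum_(i < size q) q`_i * expsum s i.
Proof.
under eq_bigr => p _ do rewrite horner_coef mulr_sumr.
rewrite exchange_big; apply: eq_bigr => i _.
by rewrite /expsum mulr_sumr; apply: eq_bigr => p _; rewrite mulrCA.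
Qed.

(* Test both sums against a polynomial vanishing at every base except b. *)
Lemma expsum_coef_eq s1 s2 : expsum s1 =1 expsum s2 ->
  forall b, \sum_(p <- s1 | p.2 == b) p.1 = \sum_(p <- s2 | p.2 == b) p.1.
Proof.
move=> eq_s12 b.
pose q := \prod_(c <- [seq p.2 | p <- s1 ++ s2] | c != b) ('X - c%:P).
have rootq c : root q c = (c != b) && (c \in [seq p.2 | p <- s1 ++ s2]).
  by rewrite /q -big_filter root_prod_XsubC mem_filter.
have qb_neq0 : q.[b] != 0 by rewrite -rootE rootq eqxx.
have sum_q s : {subset s <= s1 ++ s2} ->
    \sum_(p <- s) p.1 * q.[p.2] = (\sum_(p <- s | p.2 == b) p.1) * q.[b].
  move=> sub_s; rewrite mulr_suml [RHS]big_mkcond; apply: eq_big_seq => p ps /=.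
  case: eqP => [-> // | pb]; apply/eqP; rewrite mulf_eq0 -rootE rootq.
  by rewrite (map_f _ (sub_s p ps)) andbT; apply/orP; right; apply/eqP.
have sub1 : {subset s1 <= s1 ++ s2} by move=> p; rewrite mem_cat => ->.
have sub2 : {subset s2 <= s1 ++ s2} by move=> p; rewrite mem_cat orbC => ->.
apply: (mulIf qb_neq0); rewrite -(sum_q _ sub1) -(sum_q _ sub2) !expsum_horner.
by apply: eq_bigr => i _; rewrite eq_s12.
Qed.

End ExponentialSums.

Section ConjugationOnTuples.

Variables (gT : finGroupType) (n : nat).
Implicit Types (t : {ffun 'I_n -> gT}) (g h : gT).

Lemma tconj1 t : tconj t 1 = t.
Proof. by apply/ffunP=> i; rewrite ffunE conjg1. Qed.

Lemma tconjM t g h : tconj t (g * h) = tconj (tconj t g) h.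
Proof. by apply/ffunP=> i; rewrite !ffunE conjgM. Qed.

Definition tconj_act := TotalAction tconj1 tconjM.

Lemma afix1_tconj t g :
  (t \in afix tconj_act [set g]) = [forall i, t i \in 'C[g]].
Proof.
apply/afix1P/forallP => [t_fix i | t_cent].
  by apply/cent1P/commgP; rewrite -conjg_fix -{2}t_fix ffunE.
by apply/ffunP => i; rewrite ffunE; apply/conjg_fixP/commgP/cent1P.
Qed.

Lemma Frobenius_Cauchy_tconj (S : {set {ffun 'I_n -> gT}}) :
  [acts [set: gT], on S | tconj_act] ->
  (#|[set torbit t | t in S]| * #|gT|)%N =
  \sum_(g : gT) #|[set t in S | [forall i, t i \in 'C[g]]]|.
Proof.
move=> actsS.
have -> : [set torbit t | t in S] = orbit tconj_act [set: gT] @: S.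
  apply: eq_imset => t; apply/setP => u.
  by apply/imsetP/imsetP => -[g _ ->]; exists g.
rewrite -cardsT; apply: etrans (esym (Frobenius_Cauchy actsS)) _.
apply: eq_big => [g | g _]; first by rewrite inE.
by apply: eq_card => t; rewrite [in RHS]inE [in LHS]inE afix1_tconj.
Qed.

Lemma alpha_mulE : (alpha gT n * #|gT| = \sum_(g : gT) #|'C[g]| ^ n)%N.
Proof.
have actsT : [acts [set: gT], on [set: {ffun 'I_n -> gT}] | tconj_act].
  by apply/actsP => g _ t; rewrite !inE.
rewrite /alpha; have -> : [set torbit t | t : {ffun 'I_n -> gT}] =
                          [set torbit t | t in [set: {ffun 'I_n -> gT}]].
  by apply/setP => X; apply/imsetP/imsetP => -[t _ ->]; exists t.
rewrite Frobenius_Cauchy_tconj //; apply: eq_bigr => g _.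
rewrite -[n in (_ ^ n)%N]card_ord -card_ffun_on.
by apply: eq_card => t; rewrite !inE.
Qed.

Lemma pcomm_tconj t g : pcomm (tconj t g) = pcomm t.
Proof.
apply/forallP/forallP => comm_t i; apply/forallP => j;
  have /forallP/(_ j) := comm_t i; rewrite !ffunE -!conjMg.
  by move=> /eqP/conjg_inj ->.
by move=> /eqP ->.
Qed.

Lemma beta_mulE : (beta gT n * #|gT| =
  \sum_(g : gT)
    #|[set t : {ffun 'I_n -> gT} | pcomm t & [forall i, t i \in 'C[g]]]|)%N.
Proof.
have acts_comm : [acts [set: gT], on [set t | pcomm t] | tconj_act].
  by apply/actsP => g _ t; rewrite !inE /= pcomm_tconj.
rewrite /beta.
have -> : [set torbit t | t in [pred t : {ffun 'I_n -> gT} | pcomm t]] =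
          [set torbit t | t in [set t | pcomm t]].
  apply/setP => X; apply/imsetP/imsetP => -[t t_comm ->];
    by exists t; rewrite ?inE in t_comm *.
rewrite Frobenius_Cauchy_tconj //; apply: eq_bigr => g _.
by apply: eq_card => t; rewrite !inE.
Qed.

End ConjugationOnTuples.

Section CommutingTuples.

Variable gT : finGroupType.

Definition commuting_tuples n := [set t : {ffun 'I_n -> gT} | pcomm t].

Definition ffun_cons n (x : gT) (t : {ffun 'I_n -> gT}) : {ffun 'I_n.+1 -> gT} :=
  [ffun i => if unlift ord0 i is Some j then t j else x].

Definition ffun_behead n (u : {ffun 'I_n.+1 -> gT}) : {ffun 'I_n -> gT} :=
  [ffun j => u (lift ord0 j)].

Lemma ffun_consK n x : cancel (@ffun_cons n x) (@ffun_behead n).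
Proof. by move=> t; apply/ffunP => j; rewrite !ffunE liftK. Qed.

Lemma ffun_cons0 n x (t : {ffun 'I_n -> gT}) : ffun_cons x t ord0 = x.
Proof. by rewrite ffunE unlift_none. Qed.

Lemma ffun_beheadK n (u : {ffun 'I_n.+1 -> gT}) :
  ffun_cons (u ord0) (ffun_behead u) = u.
Proof.
by apply/ffunP => i; rewrite ffunE; case: unliftP => [j|] ->; rewrite ?ffunE.
Qed.

Lemma pcomm_cons n x (t : {ffun 'I_n -> gT}) :
  pcomm (ffun_cons x t) = pcomm t && [forall i, t i \in 'C[x]].
Proof.
apply/forallP/andP => [comm_xt | [/forallP comm_t /forallP t_cent] i].
  split; apply/forallP => i; last first.
    have /forallP/(_ ord0) := comm_xt (lift ord0 i).
    by rewrite !ffunE liftK unlift_none cent1E.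
  apply/forallP => j; have /forallP/(_ (lift ord0 j)) := comm_xt (lift ord0 i).
  by rewrite !ffunE !liftK.
apply/forallP => j; rewrite !ffunE.
case: unliftP => [i' _|_]; case: unliftP => [j' _|_] //; apply/eqP.
- exact/eqP/(forallP (comm_t i')).
- exact/cent1P/t_cent.
- exact/esym/cent1P/t_cent.
Qed.

Lemma card_commuting_tuples0 : #|commuting_tuples 0| = 1%N.
Proof.
suff -> : commuting_tuples 0 = setT by rewrite cardsT card_ffun card_ord.
by apply/setP => t; rewrite !inE; apply/forallP => -[].
Qed.

Lemma card_commuting_tuplesS n :
  #|commuting_tuples n.+1| = (beta gT n * #|gT|)%N.
Proof.
rewrite beta_mulE -sum1_card.
rewrite (partition_big (fun u : {ffun 'I_n.+1 -> gT} => u ord0) xpredT) //=.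
apply: eq_bigr => x _; rewrite sum1_card.
rewrite -(card_imset _ (can_inj (@ffun_consK n x))); apply: eq_card => u.
rewrite [in LHS]unfold_in inE; apply/andP/imsetP => [[u_comm /eqP u0] | [t]].
  exists (ffun_behead u); last by rewrite -u0 ffun_beheadK.
  by rewrite inE -pcomm_cons -u0 ffun_beheadK.
by rewrite inE => t_comm ->; rewrite ffun_cons0 pcomm_cons.
Qed.

End CommutingTuples.

Section Centralizers.

Variable gT : finGroupType.
Implicit Types x w : gT.
Local Notation Z := 'Z([set: gT]).

Lemma cent1_eqT x : ('C[x] == [set: gT]) = (x \in Z).
Proof.
apply/eqP/centerP => [Cx | [_ x_cent]].
  by split=> // y _; apply/esym/cent1P; rewrite Cx.
by apply/setP => y; rewrite in_setT; apply/cent1P/esym/x_cent; rewrite inE.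
Qed.

Lemma center_sub_cent1 x : Z \subset 'C[x].
Proof. by apply/subsetP => y /centerP[_ y_cent]; apply/cent1P/y_cent. Qed.

Lemma card_center_lt_cent1 x : x \notin Z -> (#|Z| < #|'C[x]|)%N.
Proof.
move=> xZ; apply/proper_card/properP; split; first exact: center_sub_cent1.
by exists x; rewrite ?cent1id.
Qed.

Lemma card_cent1_ltT x : x \notin Z -> (#|'C[x]| < #|gT|)%N.
Proof. by move=> xZ; rewrite -cardsT proper_card // properT cent1_eqT. Qed.

Definition ncent_sum n := (\sum_(x | x \notin Z) #|'C[x]| ^ n)%N.

Lemma alpha_mulE_center n :
  (alpha gT n * #|gT| = #|Z| * #|gT| ^ n + ncent_sum n)%N.
Proof.
rewrite alpha_mulE (bigID [in Z]) /=; congr (_ + _).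
rewrite -sum_nat_const; apply: eq_bigr => x.
by rewrite -cent1_eqT => /eqP ->; rewrite cardsT.
Qed.

Hypothesis acG : AC_group gT.

Lemma cent1_noncentral_eq x w :
  x \notin Z -> w \notin Z -> w \in 'C[x] -> 'C[w] = 'C[x].
Proof.
move=> xZ wZ wCx; have xCw : x \in 'C[w] by rewrite cent1C.
apply/eqP; rewrite eqEsubset; apply/andP; split; apply/subsetP => v vC.
  by apply/cent1P; apply: (centsP (acG wZ)) vC _ xCw.
by apply/cent1P; apply: (centsP (acG xZ)) vC _ wCx.
Qed.

Lemma card_commuting_tuples_cent1 n x : x \notin Z ->
  #|[set t : {ffun 'I_n -> gT} | pcomm t & [forall i, t i \in 'C[x]]]| =
  (#|'C[x]| ^ n)%N.
Proof.
move=> xZ; rewrite -[n in (_ ^ n)%N]card_ord -card_ffun_on; apply: eq_card => t.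
rewrite !inE andb_idl // => /forallP t_cent.
apply/forallP => i; apply/forallP => j.
by apply/eqP; apply: (centsP (acG xZ)); rewrite ?t_cent.
Qed.

Lemma beta_mulE_AC n :
  (beta gT n * #|gT| = #|Z| * #|commuting_tuples gT n| + ncent_sum n)%N.
Proof.
rewrite beta_mulE (bigID [in Z]) /=; congr (_ + _).
  rewrite -sum_nat_const; apply: eq_bigr => x; rewrite -cent1_eqT => /eqP xZ.
  apply: eq_card => t; rewrite !inE xZ andb_idr // => _.
  by apply/forallP => i; apply: in_setT.
by apply: eq_bigr => x; apply: card_commuting_tuples_cent1.
Qed.

End Centralizers.

Section CentralizerWeights.

Variable gT : finGroupType.
Implicit Types x : gT.
Local Notation Z := 'Z([set: gT]).
Local Open Scope ring_scope.

Definition cweight x : rat := (#|'C[x]| - #|Z|)%N%:R^-1.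

Definition cweight_sum : rat := \sum_(x | x \notin Z) cweight x.

Lemma cweightK x : x \notin Z -> cweight x * (#|'C[x]| - #|Z|)%N%:R = 1.
Proof.
by move=> xZ; rewrite mulVf // pnatr_eq0 -lt0n subn_gt0 card_center_lt_cent1.
Qed.

Lemma cweight_gt0 x : x \notin Z -> 0 < cweight x.
Proof. by move=> xZ; rewrite invr_gt0 ltr0n subn_gt0 card_center_lt_cent1. Qed.

Definition cent_seq (a b : rat) (f : gT -> rat) : seq (rat * rat) :=
  (a, b) :: [seq (f x, #|'C[x]|%:R) | x in ~: Z].

Lemma expsum_cent_seq a b f n : expsum (cent_seq a b f) n =
  a * b ^+ n + \sum_(x | x \notin Z) f x * #|'C[x]|%:R ^+ n.
Proof.
rewrite /expsum big_cons big_image; congr (_ + _).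
by apply: eq_bigl => x; rewrite inE.
Qed.

Lemma expsum_cent_seq_nat (a b : nat) n :
  expsum (cent_seq a%:R b%:R (fun=> 1)) n = (a * b ^ n + ncent_sum gT n)%N%:R.
Proof.
rewrite expsum_cent_seq natrD natrM natrX /ncent_sum natr_sum; congr (_ + _).
by apply: eq_bigr => x _; rewrite mul1r natrX.
Qed.

Lemma cent_seq_coef a b f c : {in ~: Z, forall x, #|'C[x]|%:R != c} ->
  \sum_(p <- cent_seq a b f | p.2 == c) p.1 = if b == c then a else 0.
Proof.
move=> neq_c; rewrite big_cons big_image_cond big1 => [|x /andP[xZ /= cx]].
  by case: ifP; rewrite ?addr0.
by have := neq_c x xZ; rewrite cx.
Qed.

Hypothesis acG : AC_group gT.

Lemma sum_cweight_cent1 x :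
  x \notin Z -> \sum_(w in 'C[x] :\: Z) cweight w = 1.
Proof.
move=> xZ; rewrite (eq_bigr (fun _ => cweight x)) => [|w]; last first.
  by rewrite inE => /andP[wZ wCx]; rewrite /cweight (cent1_noncentral_eq acG xZ wZ wCx).
by rewrite sumr_const cardsDS ?center_sub_cent1 // -mulr_natr cweightK.
Qed.

(* The sets C[x] :\: Z partition the non-central elements, each with total
   weight 1, so cweight_sum is the number of distinct non-central
   centralizers: 0 for abelian groups and at least 2 otherwise. *)
Lemma cweight_sum_neq1 : cweight_sum != 1.
Proof.
case: (pickP [pred x | x \notin Z]) => [x /= xZ | noncentral0]; last first.
  by rewrite /cweight_sum big_pred0 ?oner_neq0.
have [y _ yCx] : exists2 y, y \in [set: gT] & y \notin 'C[x].
  by apply/subsetPn; rewrite subTset cent1_eqT.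
have yZ : y \notin Z by apply: contra yCx; apply: (subsetP (center_sub_cent1 x)).
rewrite /cweight_sum (bigID [in 'C[x]]) /=.
have -> : \sum_(w | (w \notin Z) && (w \in 'C[x])) cweight w = 1.
  by rewrite -(sum_cweight_cent1 xZ); apply: eq_bigl => w; rewrite !inE andbC.
rewrite (bigD1 y) /= ?yZ ?yCx // gt_eqF // ltrDl.
rewrite (lt_le_trans (cweight_gt0 yZ)) // lerDl.
by apply: sumr_ge0 => w /andP[/andP[wZ _] _]; apply/ltW/cweight_gt0.
Qed.

Lemma card_commuting_tuples_expsum n : #|commuting_tuples gT n|%:R =
  expsum (cent_seq (1 - cweight_sum) #|Z|%:R cweight) n.
Proof.
rewrite expsum_cent_seq; elim: n => [|n IHn].
  rewrite card_commuting_tuples0 expr0 mulr1 (eq_bigr cweight) ?subrK // => x _.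
  by rewrite expr0 mulr1.
have step x : x \notin Z -> cweight x * #|'C[x]|%:R ^+ n.+1 =
    #|Z|%:R * (cweight x * #|'C[x]|%:R ^+ n) + (#|'C[x]| ^ n)%N%:R.
  move=> xZ; have := cweightK xZ.
  rewrite natrB ?(ltnW (card_center_lt_cent1 xZ)) // natrX.
  set w := cweight x; set c : rat := #|'C[x]|%:R; set z : rat := #|Z|%:R => wK.
  by rewrite -[X in _ + X]mul1r -wK exprS; ring.
rewrite card_commuting_tuplesS beta_mulE_AC // natrD natrM IHn.
by rewrite /ncent_sum natr_sum (eq_bigr _ step) big_split /= -mulr_sumr exprS; ring.
Qed.

End CentralizerWeights.

(* If z(G) < z(H), the base z(G) occurs in the expansion of the P_n of G with
   coefficient 1 - W(G) <> 0, but not in that of H, whose bases all exceed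
   z(H). *)
Lemma card_center_le_of_commuting (gT hT : finGroupType) :
  AC_group gT -> AC_group hT ->
  (forall n, #|commuting_tuples gT n| = #|commuting_tuples hT n|) ->
  (#|'Z([set: hT])| <= #|'Z([set: gT])|)%N.
Proof.
move=> acG acH eq_comm; rewrite leqNgt; apply/negP => ltGH.
pose zG : rat := #|'Z([set: gT])|%:R.
pose sG := cent_seq (1 - cweight_sum gT) zG (@cweight gT).
pose sH := cent_seq (1 - cweight_sum hT) #|'Z([set: hT])|%:R (@cweight hT).
have eq_sGH : expsum sG =1 expsum sH.
  by move=> n; rewrite -!card_commuting_tuples_expsum // eq_comm.
have := expsum_coef_eq eq_sGH zG.
rewrite !cent_seq_coef => [|y|x]; rewrite ?in_setC.
- rewrite eqxx eqr_nat gtn_eqF // => /eqP; rewrite subr_eq0 eq_sym.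
  by rewrite (negbTE (cweight_sum_neq1 acG)).
- move=> yZ; rewrite /zG eqr_nat gtn_eqF //.
  by rewrite (ltn_trans ltGH) ?card_center_lt_cent1.
- by move=> xZ; rewrite /zG eqr_nat gtn_eqF ?card_center_lt_cent1.
Qed.

Lemma card_center_eq_of_commuting (gT hT : finGroupType) :
  AC_group gT -> AC_group hT ->
  (forall n, #|commuting_tuples gT n| = #|commuting_tuples hT n|) ->
  #|'Z([set: gT])| = #|'Z([set: hT])|.
Proof.
move=> acG acH eq_comm; apply/anti_leq/andP; split.
  by apply: card_center_le_of_commuting => // n; rewrite eq_comm.
exact: card_center_le_of_commuting.
Qed.

Section EqualOrderGroups.

Variables gT hT : finGroupType.
Hypothesis eq_order : #|gT| = #|hT|.
Local Notation ZG := 'Z([set: gT]).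
Local Notation ZH := 'Z([set: hT]).

Let order_gt0 : (0 < #|gT|)%N.
Proof. by apply/card_gt0P; exists 1. Qed.

Lemma alpha_eq_iff : (forall n, alpha gT n = alpha hT n) <->
  #|ZG| = #|ZH| /\ ncent_sum gT =1 ncent_sum hT.
Proof.
split=> [eq_alpha | [eq_center eq_ncent] n]; last first.
  apply/eqP; rewrite -(eqn_pmul2r order_gt0) {2}eq_order.
  by rewrite !alpha_mulE_center eq_center eq_ncent eq_order.
have eq_sum n : (#|ZG| * #|gT| ^ n + ncent_sum gT n =
                 #|ZH| * #|gT| ^ n + ncent_sum hT n)%N.
  by rewrite -alpha_mulE_center eq_alpha eq_order alpha_mulE_center.
suff eq_center : #|ZG| = #|ZH|.
  by split=> // n; move: (eq_sum n); rewrite eq_center => /addnI.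
have eq_s : expsum (cent_seq #|ZG|%:R #|gT|%:R (fun _ : gT => 1))%R =1
            expsum (cent_seq #|ZH|%:R #|gT|%:R (fun _ : hT => 1))%R.
  by move=> n; rewrite !expsum_cent_seq_nat eq_sum.
apply/eqP; rewrite -(eqr_nat rat).
have := expsum_coef_eq eq_s #|gT|%:R%R.
rewrite !cent_seq_coef ?eqxx => [->|y|x] //; rewrite in_setC.
- by move=> yZ; rewrite eqr_nat ltn_eqF // eq_order card_cent1_ltT.
- by move=> xZ; rewrite eqr_nat ltn_eqF // card_cent1_ltT.
Qed.

Lemma beta_eq_iff_commuting : (forall n, beta gT n = beta hT n) <->
  (forall n, #|commuting_tuples gT n| = #|commuting_tuples hT n|).
Proof.
split=> [eq_beta [|n] | eq_comm n]; rewrite ?card_commuting_tuples0 //.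
  by rewrite !card_commuting_tuplesS eq_beta eq_order.
apply/eqP; rewrite -(eqn_pmul2r order_gt0) {2}eq_order.
by rewrite -!card_commuting_tuplesS eq_comm.
Qed.

Hypotheses (acG : AC_group gT) (acH : AC_group hT).

Lemma beta_eq_iff : (forall n, beta gT n = beta hT n) <->
  #|ZG| = #|ZH| /\ ncent_sum gT =1 ncent_sum hT.
Proof.
rewrite beta_eq_iff_commuting; split=> [eq_comm | [eq_center eq_ncent]].
  have eq_center := card_center_eq_of_commuting acG acH eq_comm.
  split=> // n; have := beta_mulE_AC acG n.
  rewrite -card_commuting_tuplesS !eq_comm card_commuting_tuplesS.
  by rewrite beta_mulE_AC // eq_center => /addnI.
elim=> [|n IHn]; first by rewrite !card_commuting_tuples0.
by rewrite !card_commuting_tuplesS !beta_mulE_AC // IHn eq_center eq_ncent.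
Qed.

End EqualOrderGroups.

Theorem theorem6p5 (gT hT : finGroupType) :
  AC_group gT -> AC_group hT -> #|[set: gT]| = #|[set: hT]| ->
  ((forall n : nat, alpha gT n = alpha hT n) <->
   (forall n : nat, beta gT n = beta hT n)).
Proof.
move=> acG acH; rewrite !cardsT => eq_order.
by rewrite (alpha_eq_iff eq_order) (beta_eq_iff eq_order acG acH).
Qed.
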